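(* Let $k\ge 1$ and $n\ge 1$ be integers. If the odd cycle $C_{2n+1}$ is a strict prime $k$th-power distance graph, then so is every larger odd cycle $C_{2(n+j)+1}$, $j\ge 1$.
   Context: A graph $G$ is a strict prime $k$th-power distance graph if there is an injective map $L:V(G)\to\mathbb{Z}$ such that for every edge $uv$ of $G$, $|L(u)-L(v)|=p^k$ for some prime $p$ (the prime may depend on the edge). *)

From mathcomp Require Import all_boot all_order all_algebra.
Set Implicit Arguments. Unset Strict Implicit. Unset Printing Implicit Defensive.
Import Order.TTheory GRing.Theory Num.Theory.

(* A simple graph on a finite vertex type T is given by an adjacency relation e
   (assumed symmetric and irreflexive where relevant). *)

Definition strict_prime_kth_power_distance_graph (k : nat) (T : finType)
    (e : rel T) : Prop :=
  exists L : T -> int, injective L /\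
    forall u v : T, e u v -> exists p : nat, prime p /\ (`|L u - L v|)%R = Posz (p ^ k).

(* The cycle C_m on vertex set {0, ..., m-1}: i ~ j iff j = i+1 mod m or
   i = j+1 mod m.  (Meaningful as a simple cycle for m >= 3.) *)
Definition cycle_rel (m : nat) : rel 'I_m :=
  fun i j => ((j : nat) == (i + 1) %% m) || ((i : nat) == (j + 1) %% m).

From mathcomp Require Import all_boot all_order all_algebra.
From mathcomp Require Import zify.
Import GRing.Theory Num.Theory.

(* Label the cycle C_m by f 0, ..., f (m-1) and pick a prime power d = p^k
   exceeding twice every |f i|.  Inserting f (m-1) + d and f 0 + d after
   f (m-1) gives a labelling of C_(m+2): the two new edges have length d, the
   edge between the new vertices repeats the old edge from m-1 to 0, and the
   new labels are larger than every old one, so they are fresh. *)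

Definition prime_power_dist (k : nat) (x y : int) :=
  exists p : nat, prime p /\ `|x - y|%R = Posz (p ^ k).

Lemma prime_power_distC k x y :
  prime_power_dist k x y -> prime_power_dist k y x.
Proof. by rewrite /prime_power_dist distrC. Qed.

Lemma prime_power_distDr k x y d :
  prime_power_dist k x y -> prime_power_dist k (x + d)%R (y + d)%R.
Proof. by rewrite /prime_power_dist (addrC y) addrKA. Qed.

Lemma prime_power_dist_addr k p x :
  prime p -> prime_power_dist k x (x + Posz (p ^ k))%R.
Proof. by move=> p_pr; exists p; rewrite opprD addrA subrr add0r normrN. Qed.

Lemma exists_prime_power_gt k N : 0 < k -> exists2 p, prime p & N < p ^ k.
Proof.
move=> k_gt0; have [p N_lt_p p_pr] := prime_above N.
exists p => //; apply: leq_trans N_lt_p _.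
by rewrite -{1}(expn1 p) leq_pexp2l // prime_gt0.
Qed.

(* A labelling of C_m as a function on nat; only its values below m matter. *)
Definition cycle_labelling (k m : nat) (f : nat -> int) :=
  {in [pred i | i < m] &, injective f} /\
  forall i, i < m -> prime_power_dist k (f i) (f ((i + 1) %% m)).

Lemma cycle_labellingP k m : 0 < m ->
  strict_prime_kth_power_distance_graph k (@cycle_rel m) <->
  exists f, cycle_labelling k m f.
Proof.
move=> m_gt0; pose o0 := Ordinal m_gt0; split.
- move=> [L [L_inj L_edge]]; exists (L \o insubd o0); split.
  + move=> i j; rewrite !inE => i_lt j_lt /L_inj /(congr1 val).
    by rewrite !val_insubd /= i_lt j_lt.
  + move=> i i_lt /=.
    pose u := Ordinal i_lt; pose v := Ordinal (ltn_pmod (i + 1) m_gt0).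
    have -> : insubd o0 i = u by apply: val_inj; rewrite val_insubd i_lt.
    have -> : insubd o0 ((i + 1) %% m) = v.
      by apply: val_inj; rewrite val_insubd ltn_pmod.
    by apply: L_edge; rewrite /cycle_rel eqxx.
- move=> [f [f_inj f_edge]]; exists (fun u => f (val u)); split.
  + by move=> u v fuv; apply: val_inj; apply: f_inj fuv; rewrite inE /=.
  + move=> u v /orP[/eqP e | /eqP e]; rewrite /= e; first exact: f_edge.
    exact/prime_power_distC/f_edge.
Qed.

Definition extend2 (f : nat -> int) (m : nat) (x y : int) (i : nat) :=
  if i < m then f i else if i == m then x else y.

Lemma extend2_inj f m x y :
  {in [pred i | i < m] &, injective f} -> x != y ->
  (forall i, i < m -> f i != x /\ f i != y) ->
  {in [pred i | i < m.+2] &, injective (extend2 f m x y)}.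
Proof.
move=> f_inj xy fresh i j; rewrite !inE /extend2 => i_lt j_lt.
case: ltnP => i_m; case: ltnP => j_m.
- exact: f_inj.
- by case: eqP => _ fij; have [] := fresh _ i_m; rewrite fij eqxx.
- by case: eqP => _ fij; have [] := fresh _ j_m; rewrite -fij eqxx.
- case: eqP => [->|i_neq]; case: eqP => [->|j_neq] // eq_xy;
    by [rewrite eq_xy eqxx in xy | lia].
Qed.

Lemma extend2_edges k m f p : 1 < m -> prime p ->
  (forall i, i < m -> prime_power_dist k (f i) (f ((i + 1) %% m))) ->
  let d := Posz (p ^ k) in
  let g := extend2 f m (f m.-1 + d)%R (f 0%N + d)%R in
  forall i, i < m.+2 -> prime_power_dist k (g i) (g ((i + 1) %% m.+2)).
Proof.
move=> m_gt1 p_pr f_edge d g i i_lt; rewrite /g /extend2.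
have m_pred1 : m.-1 + 1 = m by lia.
have eqSn_false : (m.+1 == m) = false by lia.
have [i_lt1 | [-> | [-> | ->]]] : i < m.-1 \/ i = m.-1 \/ i = m \/ i = m.+1 by lia.
- have i_lt_m : i < m by lia.
  have := f_edge _ i_lt_m.
  by rewrite !modn_small ?i_lt_m ?ifT //; lia.
- rewrite m_pred1 modn_small // ltnn eqxx ltn_predL (ltnW m_gt1).
  exact: prime_power_dist_addr.
- rewrite ltnn eqxx addn1 modn_small // ltnNge leqnSn eqSn_false.
  apply: prime_power_distDr.
  by have := f_edge m.-1; rewrite m_pred1 modnn ltn_predL; apply; apply: ltnW.
- rewrite addn1 modnn ltnNge leqnSn eqSn_false (ltnW m_gt1).
  exact/prime_power_distC/prime_power_dist_addr.
Qed.

Lemma cycle_labelling_add2 k m f : 0 < k -> 1 < m ->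
  cycle_labelling k m f -> exists g, cycle_labelling k m.+2 g.
Proof.
move=> k_gt0 m_gt1 [f_inj f_edge].
pose M := \max_(i < m) `|f i|%N.
have f_le_M i : i < m -> `|f i|%N <= M.
  by move=> i_lt; exact: (leq_bigmax (Ordinal i_lt)).
have [p p_pr M_lt] := exists_prime_power_gt _ (2 * M) k_gt0.
pose d := Posz (p ^ k).
exists (extend2 f m (f m.-1 + d)%R (f 0%N + d)%R); split; last exact: extend2_edges.
have m_pred_lt : m.-1 < m by lia.
apply: extend2_inj => //.
  apply/eqP => /addIr /f_inj; rewrite !inE; lia.
move=> i i_lt; have := f_le_M _ i_lt; have := f_le_M _ m_pred_lt.
have := f_le_M 0 (ltnW m_gt1); rewrite /d; lia.
Qed.

Theorem mainTheorem13 (k n : nat) (hk : 1 <= k) (hn : 1 <= n) :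
  @strict_prime_kth_power_distance_graph k _ (@cycle_rel (2 * n + 1)) ->
  forall j : nat, 1 <= j ->
    @strict_prime_kth_power_distance_graph k _ (@cycle_rel (2 * (n + j) + 1)).
Proof.
move=> C_labelled j _; elim: j => [|j IH]; first by rewrite addn0.
have -> : 2 * (n + j.+1) + 1 = (2 * (n + j) + 1).+2 by lia.
move: IH; rewrite !cycle_labellingP ?addn1 // => -[f f_lab].
by apply: cycle_labelling_add2 f_lab => //; lia.
Qed.
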